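(* Let $\alpha\ge2$, $\varepsilon\ge0$, $\ell,t\ge1$ and $1\le h\le\alpha\ell+\varepsilon$ be integers, and $q$ a prime power. Let $\gamma=3.48$, $\beta=\big(\frac{(\alpha-1)!}{2e\gamma\alpha}\big)^{1/(\alpha-1)}$ and $f(t)=(\alpha\ell+\varepsilon-h)\varepsilon t^2+(\alpha\ell+2\varepsilon-h)t+1$. If $r\le\beta\,q^{f(t)/(\alpha-1)}$, then the $(\varepsilon,\ell)$-$\mathcal N_{h,r,\alpha\ell+\varepsilon}$ network has a $(q,t)$-linear solution, i.e., there exist matrices $\boldsymbol A_1,\dots,\boldsymbol A_r\in\mathbb F_q^{\ell t\times ht}$ such that for every $1\le i_1<\dots<i_\alpha\le r$ the stacked matrix $\begin{pmatrix}\boldsymbol A_{i_1}\\ \vdots\\ \boldsymbol A_{i_\alpha}\end{pmatrix}$ has rank at least $(h-\varepsilon)t$.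
   Context: The generalized combination network $(\varepsilon,\ell)$-$\mathcal N_{h,r,\alpha\ell+\varepsilon}$ has a source with $h$ messages, $r$ middle nodes each connected to the source by $\ell$ parallel links, and one receiver for each $\alpha$-subset of middle nodes, connected to each of those $\alpha$ nodes by $\ell$ links and to the source by $\varepsilon$ direct links. A $(q,t)$-linear solution (messages in $\mathbb F_q^t$) exists if and only if there are coding matrices $\boldsymbol A_1,\dots,\boldsymbol A_r\in\mathbb F_q^{\ell t\times ht}$ for the middle nodes such that every $\alpha$ of them stacked have rank at least $(h-\varepsilon)t$ (the direct links then supply the remaining information). $e$ is Euler's number. *)

From Stdlib Require Import Reals.
From mathcomp Require Import all_boot all_order all_algebra all_field.
Set Implicit Arguments. Unset Strict Implicit. Unset Printing Implicit Defensive.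
Import GRing.Theory.
Local Open Scope R_scope.
Local Notation "x / y" := (Rdiv x y) : R_scope.

Definition gamma_const : R := 348 / 100.

Definition beta_const (alpha : nat) : R :=
  Rpower (INR ((alpha - 1)`!) / (2 * exp 1 * gamma_const * INR alpha))
         (1 / INR (alpha - 1)).

(* f(t) = (alpha l + eps - h) eps t^2 + (alpha l + 2 eps - h) t + 1 (all terms nonnegative
   since h <= alpha l + eps) *)
Local Close Scope R_scope.
Definition f_exp (alpha eps l h t : nat) : nat :=
  (alpha * l + eps - h) * eps * t ^ 2 + (alpha * l + 2 * eps - h) * t + 1.

Definition stack (F : fieldType) (r alpha m n : nat) (A : 'I_r -> 'M[F]_(m, n))
  (s : 'I_alpha -> 'I_r) : 'M[F]_(\sum_(i < alpha) m, n) :=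
  \mxcol_(i < alpha) A (s i).

From Stdlib Require Import Reals Lra Lia.
From mathcomp Require Import all_boot all_order all_algebra all_field zify.
Set Implicit Arguments. Unset Strict Implicit. Unset Printing Implicit Defensive.
Import GRing.Theory.

(* Random coding with alteration.  Take R = r + (r %/ alpha + 1) matrices of
   size l t x h t and call an alpha-tuple of them bad when its stack has rank
   at most s0 = (h - eps) t - 1.  Counting row by row, at most
   4 q^(s0 (N + M - s0)) matrices of size N x M have rank <= s0 (the
   q-Pochhammer product (1/q; 1/q)_d >= 1/4 absorbs the lower-order terms), so
   by averaging some family has at most 4 C(R, alpha) q^(-f(t)) bad increasing
   tuples, and the choice of beta makes this at most r %/ alpha + 1.  Deleting
   the first index of every bad tuple leaves r indices among which no
   increasing tuple is bad. *)

Section LowRankCount.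
Variable F : finFieldType.

Definition lowrank_mx N M s := [set X : 'M[F]_(N, M) | \rank X <= s].

Lemma card_rV_submx N M (X : 'M[F]_(N, M)) :
  #|[set x : 'rV_M | (x <= X)%MS]| = #|F| ^ \rank X.
Proof.
have -> : [set x : 'rV_M | (x <= X)%MS] =
          [set (y *m row_base X)%R | y in [set: 'rV_(\rank X)]].
  apply/setP => x; rewrite inE; apply/idP/imsetP.
    by rewrite -(eq_row_base X) => /submxP [y ->]; exists y.
  by move=> [y _ ->]; rewrite -(eq_row_base X) submxMl.
rewrite card_imset; last exact/row_free_inj/row_base_free.
by rewrite cardsT card_mx mul1n.
Qed.

Lemma card_rV_submx_pairs N M (A : {set 'M[F]_(N, M)}) :
  #|[set p : 'rV_M * 'M_(N, M) | (p.2 \in A) && (p.1 <= p.2)%MS]| =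
    \sum_(X in A) #|F| ^ \rank X.
Proof.
pose g (x : 'rV[F]_M) (X : 'M[F]_(N, M)) :=
  if (X \in A) && (x <= X)%MS then 1 else 0.
rewrite -sum1_card big_mkcond /=.
rewrite (eq_bigr (fun p : 'rV[F]_M * 'M[F]_(N, M) => g p.1 p.2)); last first.
  by move=> [x X] _; rewrite inE.
rewrite -(pair_bigA _ g) exchange_big [RHS]big_mkcond /g /=.
apply: eq_bigr => X _; case: (X \in A) => /=; last by rewrite big1.
rewrite -card_rV_submx -sum1_card [RHS]big_mkcond.
by apply: eq_bigr => x _; rewrite inE.
Qed.

(* Split off the first row x of a matrix col_mx x X of rank <= s + 1: either
   X has rank <= s and x is arbitrary, or X has rank s + 1 and x lies in its
   row space. *)
Lemma card_lowrank_mx_rec N M s :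
  #|lowrank_mx (1 + N) M s.+1| <=
    #|F| ^ M * #|lowrank_mx N M s| + #|F| ^ s.+1 * #|lowrank_mx N M s.+1|.
Proof.
pose f (p : 'rV[F]_M * 'M[F]_(N, M)) := col_mx p.1 p.2.
have f_inj : injective f.
  by move=> [x X] [y Y]; rewrite /f /= => /eq_col_mx [-> ->].
have -> : lowrank_mx (1 + N) M s.+1 = f @: [set p | \rank (f p) <= s.+1].
  apply/setP => C; rewrite inE; apply/idP/imsetP => [rkC | [p]].
    by exists (usubmx C, dsubmx C); [rewrite inE|]; rewrite /f /= vsubmxK.
  by rewrite inE => rkp ->.
rewrite card_imset //.
pose S1 := setX [set: 'rV[F]_M] (lowrank_mx N M s).
pose S2 := [set p : 'rV_M * 'M_(N, M) |
              (p.2 \in lowrank_mx N M s.+1) && (p.1 <= p.2)%MS].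
have sub : [set p | \rank (f p) <= s.+1] \subset S1 :|: S2.
  apply/subsetP => [[x X]]; rewrite !inE /f /= => rk_xX.
  have sXxX : (X <= col_mx x X)%MS by rewrite -addsmxE addsmxSr.
  case: (leqP (\rank X) s) => //= rkX.
  have eq_rk : \rank X = \rank (col_mx x X).
    by apply/eqP; rewrite eqn_leq mxrankS //; apply: leq_trans rk_xX _.
  rewrite eq_rk rk_xX /=.
  move/eqP: eq_rk; rewrite (mxrank_leqif_eq sXxX) => /andP [_ sxXX].
  by apply: submx_trans sxXX; rewrite -addsmxE addsmxSl.
apply: leq_trans (subset_leq_card sub) _.
apply: leq_trans (leq_card_setU _ _) _.
apply: leq_add; first by rewrite cardsX cardsT card_mx mul1n.
rewrite card_rV_submx_pairs mulnC -sum_nat_const; apply: leq_sum => X.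
by rewrite inE => rkX; apply: leq_pexp2l; rewrite ?(ltnW (card_finNzRing_gt1 F)).
Qed.

Lemma card_lowrank_mx0 N M : #|lowrank_mx N M 0| <= 1.
Proof.
rewrite -(cards1 (0%R : 'M[F]_(N, M))); apply: subset_leq_card.
by apply/subsetP => X; rewrite !inE leqn0 mxrank_eq0.
Qed.

End LowRankCount.

Local Open Scope R_scope.

Lemma INR_expn a b : INR (a ^ b)%N = INR a ^ b.
Proof. by elim: b => [|b IH] //; rewrite expnS mulnE mult_INR IH. Qed.

Lemma INR_muln a b : INR (a * b)%N = INR a * INR b.
Proof. by rewrite mulnE mult_INR. Qed.

Lemma INR_addn a b : INR (a + b)%N = INR a + INR b.
Proof. by rewrite addnE plus_INR. Qed.

Lemma INR_leq a b : (a <= b)%N -> INR a <= INR b.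
Proof. by move/leP; apply: le_INR. Qed.

Lemma pow_addn x a b : x ^ (a + b)%N = x ^ a * x ^ b.
Proof. by rewrite addnE pow_add. Qed.

Lemma pow_unit_interval x n : 0 <= x <= 1 -> 0 <= x ^ n <= 1.
Proof.
by move=> x01; split; [apply: pow_le | rewrite -(pow1 n); apply: pow_incr]; lra.
Qed.

Fixpoint qpoch (x : R) (d : nat) : R :=
  if d is d'.+1 then qpoch x d' * (1 - x ^ d'.+1) else 1.

Lemma qpoch_S x d : qpoch x d.+1 = qpoch x d * (1 - x ^ d.+1).
Proof. by []. Qed.

Lemma qpoch_ge0_le1 x d : 0 <= x <= 1 -> 0 <= qpoch x d <= 1.
Proof.
move=> x01; elim: d => [|d [Q0 Q1]]; first by rewrite /=; lra.
have [p0 p1] := pow_unit_interval d.+1 x01.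
rewrite qpoch_S; split; first by apply: Rmult_le_pos; lra.
by rewrite -[1]Rmult_1_r; apply: Rmult_le_compat; lra.
Qed.

(* The extra term x ^ d.+1 / 2 makes the induction go through. *)
Lemma qpoch_lower_bound x d :
  0 <= x <= 1/2 -> 1/4 + x ^ d.+1 / 2 <= qpoch x d.+1.
Proof.
move=> x_small; elim: d => [|d IH]; first by rewrite /= Rmult_1_r; lra.
rewrite qpoch_S [x ^ d.+2]/= -/(x ^ d.+1).
move: IH; set y := x ^ d.+1; set Q := qpoch x d.+1 => IH.
have [y0 y1] : 0 <= y <= 1/2.
  have : 0 <= x ^ d <= 1 by apply: pow_unit_interval; lra.
  rewrite /y /=; nra.
have : (1/4 + y/2) * (1 - x * y) <= Q * (1 - x * y).
  by apply: Rmult_le_compat_r; nra.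
nra.
Qed.

Lemma qpoch_ge_quarter x d : 0 <= x <= 1/2 -> 1/4 <= qpoch x d.
Proof.
case: d => [|d] x_small; first by rewrite /=; lra.
have := qpoch_lower_bound d x_small; have : 0 <= x ^ d.+1 by apply: pow_le; lra.
lra.
Qed.

(* The inductive step of [card_lowrank_mx_qpoch], for u = q ^ M, v = q ^ s.+1
   and b = q ^ (N - s). *)
Lemma recurrence_step (u v c c1 c2 A1 A2 P b : R) :
  0 <= P -> 1 <= b -> 0 <= u -> 0 <= v ->
  c <= u * c1 + v * c2 -> c1 * (P * (1 - / b)) <= A1 -> c2 * P <= A2 ->
  v * A2 = u * A1 * b -> c * (P * (1 - / b)) <= u * A1 * b.
Proof.
move=> P0 b1 u0 v0 rec IH1 IH2 eqA.
have ib : 0 <= 1 - / b <= 1.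
  have : 0 < / b by apply: Rinv_0_lt_compat; lra.
  have : / b <= 1 by rewrite -Rinv_1; apply: Rinv_le_contravar; lra.
  lra.
have -> : u * A1 * b = u * A1 + v * A2 * (1 - / b) by rewrite eqA; field; lra.
apply: Rle_trans (_ : (u * c1 + v * c2) * (P * (1 - / b)) <= _).
  by apply: Rmult_le_compat_r; nra.
have : u * (c1 * (P * (1 - / b))) <= u * A1 by apply: Rmult_le_compat_l.
have : v * (c2 * P) * (1 - / b) <= v * A2 * (1 - / b).
  by apply: Rmult_le_compat_r; [lra | apply: Rmult_le_compat_l].
nra.
Qed.

Section LowRankBound.
Variable F : finFieldType.
Let q := INR #|F|.

Lemma card_field_ge2 : 2 <= q.
Proof. exact: INR_leq (card_finNzRing_gt1 F). Qed.

Lemma inv_card_field_range : 0 <= / q <= 1/2.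
Proof.
have q2 := card_field_ge2; split; first by apply/Rlt_le/Rinv_0_lt_compat; lra.
by rewrite /Rdiv Rmult_1_l; apply: Rinv_le_contravar; lra.
Qed.

Lemma card_lowrank_mx_qpoch N M s : (s <= N)%N -> (s <= M)%N ->
  INR #|lowrank_mx F N M s| * qpoch (/ q) (N - s) <= q ^ (s * (N + M - s)).
Proof.
have q2 := card_field_ge2; have qinv := inv_card_field_range.
have [qinv0 qinv1] : 0 <= / q <= 1 by lra.
elim: N s => [|N IH] [|s] sN sM //.
- by rewrite /= Rmult_1_r; exact: INR_leq (card_lowrank_mx0 F 0 M).
- have [Q0 Q1] := qpoch_ge0_le1 N.+1 (conj qinv0 qinv1).
  rewrite mul0n subn0 pow_O -[1]Rmult_1_r.
  apply: Rmult_le_compat => //; first exact: pos_INR.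
  exact: INR_leq (card_lowrank_mx0 F _ M).
move: sN; rewrite ltnS leq_eqVlt => /orP [/eqP -> | sltN].
  by rewrite subnn Rmult_1_r addKn -INR_expn -card_mx; apply/INR_leq/max_card.
have [k defN] : exists k, N = (s + k.+1)%N by exists (N - s.+1)%N; lia.
subst N.
have -> : ((s + k.+1).+1 - s.+1 = k.+1)%N by lia.
have IH1 := IH s (ltnW sltN) (ltnW sM).
have := IH s.+1 sltN sM.
have -> : (s + k.+1 - s.+1 = k)%N by lia.
rewrite addKn in IH1 => IH2.
rewrite qpoch_S pow_inv in IH1 *.
have -> : (s.+1 * ((s + k.+1).+1 + M - s.+1) = M + s * (s + k.+1 + M - s) + k.+1)%N.
  by nia.
rewrite !pow_addn; apply: (recurrence_step (v := q ^ s.+1)) IH1 IH2 _.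
- by have [] := qpoch_ge0_le1 k (conj qinv0 qinv1).
- by apply: pow_R1_Rle; lra.
- by apply: pow_le; lra.
- by apply: pow_le; lra.
- have := INR_leq (card_lowrank_mx_rec F (s + k.+1) M s).
  by rewrite INR_addn !INR_muln !INR_expn.
- rewrite -!pow_addn; congr (q ^ _); nia.
Qed.

Lemma card_lowrank_mx_le N M s : (s <= N)%N -> (s <= M)%N ->
  INR #|lowrank_mx F N M s| <= 4 * q ^ (s * (N + M - s)).
Proof.
move=> sN sM; have := card_lowrank_mx_qpoch sN sM.
have := qpoch_ge_quarter (N - s) inv_card_field_range.
have := pos_INR #|lowrank_mx F N M s|; nra.
Qed.

End LowRankBound.

Local Close Scope R_scope.

Lemma ffact_le_expn n m : n ^_ m <= n ^ m.
Proof.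
elim: m => [|m IH]; first by rewrite ffactn0.
by rewrite ffactnSr expnSr leq_mul // leq_subr.
Qed.

(* q^f(t) is the ratio of q^(N M), the number of N x M stacks for N = alpha l t
   and M = h t, to the bound q^(s0 (N + M - s0)) on those of rank <= s0. *)
Lemma f_exp_rank_deficiency alpha eps l h t :
  0 < t -> eps < h -> h <= alpha * l + eps ->
  let s0 := ((h - eps) * t).-1 in
  [/\ s0 * (alpha * (l * t) + h * t - s0) + f_exp alpha eps l h t
        = alpha * (l * t) * (h * t),
      s0 <= alpha * (l * t) & s0 <= h * t].
Proof.
move=> t_gt0 eps_lt_h h_le s0; rewrite mulnA.
split; last 2 first.
- apply: leq_trans (leq_pred _) _.
  by rewrite leq_mul2r leq_subLR addnC h_le orbT.
- by apply: leq_trans (leq_pred _) _; rewrite leq_mul2r leq_subr orbT.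
rewrite /s0 /f_exp.
move: (alpha * l) h_le => P h_le.
have [d def_h] : exists d, h = eps + d.+1 by exists (h - eps).-1; lia.
have [c def_P] : exists c, P = d.+1 + c by exists (P - d.+1); lia.
have [u def_t] : exists u, t = u.+1 by exists t.-1; lia.
rewrite def_P def_h def_t.
have -> : eps + d.+1 - eps = d.+1 by lia.
have -> : d.+1 + c + eps - (eps + d.+1) = c by lia.
have -> : d.+1 + c + 2 * eps - (eps + d.+1) = c + eps by lia.
have -> : (d.+1 * u.+1).-1 = d * u.+1 + u by rewrite mulSn addSn addnC.
have -> : (d.+1 + c) * u.+1 + (eps + d.+1) * u.+1 - (d * u.+1 + u)
          = c * u.+1 + (eps + d.+1) * u.+1 + 1.
  by rewrite addnC !mulnDl mulSn; lia.
nia.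
Qed.

Lemma increasing_inj a b (s : 'I_a -> 'I_b) :
  (forall i j : 'I_a, i < j -> s i < s j) -> injective s.
Proof.
move=> s_incr i j eq_s; apply/val_inj; case: (ltngtP i j) => // [ij | ji].
  by have := s_incr _ _ ij; rewrite eq_s ltnn.
by have := s_incr _ _ ji; rewrite eq_s ltnn.
Qed.

Lemma exists_le_average (T : finType) (x0 : T) (f : T -> nat) :
  exists x, f x * #|T| <= \sum_y f y.
Proof.
exists [arg min_(x < x0) f x]; case: arg_minnP => // x _ min_x.
by rewrite mulnC -sum_nat_const; apply: leq_sum => y _; apply: min_x.
Qed.

Section Alteration.
Variables (F : finFieldType) (m n alpha R s0 : nat).
Local Notation mx := 'M[F]_(m, n).

Definition increasing (s : {ffun 'I_alpha -> 'I_R}) :=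
  [forall i : 'I_alpha, forall j : 'I_alpha, (i < j) ==> (s i < s j)].

Lemma increasingP (s : {ffun 'I_alpha -> 'I_R}) :
  reflect (forall i j : 'I_alpha, i < j -> s i < s j) (increasing s).
Proof.
apply: (iffP forallP) => [s_incr i j | s_incr i].
  by move/forallP: (s_incr i) => /(_ j) /implyP.
by apply/forallP => j; apply/implyP; apply: s_incr.
Qed.

Definition bad_tuples (A : {ffun 'I_R -> mx}) :=
  [set s | increasing s & \rank (stack A s) <= s0].

Lemma card_increasing : #|[set s | increasing s]| <= 'C(R, alpha).
Proof.
rewrite -card_ltn_sorted_tuples.
pose f (s : {ffun 'I_alpha -> 'I_R}) := [tuple s i | i < alpha].
have f_inj : injective f.
  move=> s s' eq_f; apply/ffunP => i.
  by have := congr1 (fun t => tnth t i) eq_f; rewrite !tnth_mktuple.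
rewrite -(card_imset _ f_inj); apply/subset_leq_card/subsetP => t.
move=> /imsetP [s]; rewrite !inE => /increasingP s_incr ->.
rewrite -map_comp sorted_map.
have : sorted (relpre val ltn) (enum 'I_alpha).
  by rewrite -sorted_map val_enum_ord iota_ltn_sorted.
by apply: sub_sorted => i j; apply: s_incr.
Qed.

(* A family with a given low-rank stack at s is determined by that stack and by
   its R - alpha other matrices. *)
Lemma card_low_stack s : increasing s ->
  #|[set A : {ffun 'I_R -> mx} | \rank (stack A s) <= s0]| <=
    #|lowrank_mx F (\sum_(i < alpha) m) n s0| * #|{: mx}| ^ (R - alpha).
Proof.
move=> /increasingP /increasing_inj s_inj.
pose D := [pred j : 'I_R | j \notin codom s].
pose g (A : {ffun 'I_R -> mx}) :=
  (stack A s, [ffun j => if j \in codom s then 0%R else A j]).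
have g_inj : injective g.
  move=> A A' [eq_s /ffunP eq_D]; apply/ffunP => j.
  move: eq_s; rewrite /stack => /eq_mxcolP eq_s.
  case: (boolP (j \in codom s)) => [/codomP [i ->] // | Dj].
  by have := eq_D j; rewrite !ffunE (negbTE Dj).
rewrite -(card_imset _ g_inj).
apply: leq_trans (_ : #|setX (lowrank_mx F _ n s0)
                           [set z | z \in pffun_on 0%R D predT]| <= _).
  apply/subset_leq_card/subsetP => p /imsetP [A]; rewrite inE => rkA ->.
  rewrite !inE rkA; apply/pffun_onP; split=> //; apply/subsetP => j.
  by rewrite !inE ffunE; case: (j \in codom s); rewrite //= eqxx.
rewrite cardsX leq_mul2l (cardsE (pffun_on 0%R D predT)) card_pffun_on.
apply/orP; right.
have := cardC (mem (codom s)); rewrite card_codom // !card_ord => cardR.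
by rewrite -[X in X - alpha]cardR addKn; apply/eq_leq; congr (_ ^ _).
Qed.

Lemma exists_few_bad_tuples : alpha <= R -> exists A0,
  #|bad_tuples A0| * #|{: mx}| ^ alpha <=
    #|[set s | increasing s]| * #|lowrank_mx F (\sum_(i < alpha) m) n s0|.
Proof.
move=> le_alpha_R.
have [A0 avgA0] := exists_le_average [ffun=> 0%R] (fun A => #|bad_tuples A|).
have mx_gt0 : 0 < #|{: mx}| ^ (R - alpha).
  by rewrite expn_gt0; apply/orP; left; apply/card_gt0P; exists 0%R.
exists A0; rewrite -(leq_pmul2r mx_gt0) -mulnA -expnD.
have -> : #|{: mx}| ^ (alpha + (R - alpha)) = #|{: {ffun 'I_R -> mx}}|.
  by rewrite subnKC // card_ffun card_ord.
apply: leq_trans avgA0 _.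
have -> : \sum_(A : {ffun 'I_R -> mx}) #|bad_tuples A| =
          \sum_(s | increasing s)
            #|[set A : {ffun 'I_R -> mx} | \rank (stack A s) <= s0]|.
  rewrite (eq_bigr (fun A : {ffun 'I_R -> mx} =>
                      \sum_s (increasing s && (\rank (stack A s) <= s0) : nat))).
    rewrite exchange_big /= [RHS]big_mkcond; apply: eq_bigr => s _.
    case: (increasing s) => /=; last by rewrite big1.
    by rewrite -sum1_card [RHS]big_mkcond; apply: eq_bigr => A _; rewrite inE.
  move=> A _; rewrite -sum1_card big_mkcond.
  by apply: eq_bigr => s _; rewrite inE; case: (_ && _).
apply: leq_trans (_ : _ <= \sum_(s | increasing s)
  #|lowrank_mx F (\sum_(i < alpha) m) n s0| * #|{: mx}| ^ (R - alpha)) _.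
  by apply: leq_sum => s; apply: card_low_stack.
rewrite -mulnA (eq_bigl (fun s => s \in [set s | increasing s])) ?sum_nat_const //.
by move=> s; rewrite inE.
Qed.

Lemma sorted_enum_set (K : {set 'I_R}) : sorted (relpre val ltn) (enum K).
Proof.
have -> : enum K = filter (mem K) (enum 'I_R) by rewrite enumT.
apply: sorted_filter; first by move=> a b c; apply: ltn_trans.
by rewrite -sorted_map val_enum_ord iota_ltn_sorted.
Qed.

(* The witness keeps the first r indices that start no bad tuple of A0. *)
Lemma exists_family_without_bad_tuples (A0 : {ffun 'I_R -> mx}) r k :
  0 < alpha -> 0 < r -> #|bad_tuples A0| <= k -> r + k <= R ->
  exists A : 'I_r -> mx, forall s : 'I_alpha -> 'I_r,
    (forall i j : 'I_alpha, i < j -> s i < s j) -> s0 < \rank (stack A s).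
Proof.
move=> alpha_gt0 r_gt0 bad_le_k rk_le_R.
have R_gt0 : 0 < R by apply: leq_trans rk_le_R; rewrite addn_gt0 r_gt0.
pose x0 : 'I_R := Ordinal R_gt0; pose i0 : 'I_alpha := Ordinal alpha_gt0.
pose D := [set (s : {ffun 'I_alpha -> 'I_R}) i0 | s in bad_tuples A0].
pose K := ~: D.
have r_le_K : r <= #|K|.
  have := cardsC D; rewrite card_ord.
  have : #|D| <= k by apply: leq_trans (leq_imset_card _ _) bad_le_k.
  rewrite /K; lia.
pose e (i : 'I_r) := nth x0 (enum K) i.
have lt_K i : i < r -> i < size (enum K) by rewrite -cardE => /leq_trans; apply.
have eK i : e i \in K by rewrite -mem_enum mem_nth // lt_K.
have e_incr (i j : 'I_r) : i < j -> e i < e j.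
  move=> lt_ij; have := @sorted_ltn_nth _ (relpre val ltn)
    (fun a b c => @ltn_trans _ _ _) x0 _ (sorted_enum_set K) i j.
  by apply; rewrite ?inE ?lt_K.
exists (fun i => A0 (e i)) => s s_incr; rewrite ltnNge; apply/negP => rk_low.
pose s' := [ffun i => e (s i)].
have bad_s' : s' \in bad_tuples A0.
  rewrite inE; apply/andP; split.
    by apply/increasingP => i j /s_incr; rewrite !ffunE; apply: e_incr.
  apply: leq_trans rk_low; apply/eq_leq; congr (\rank _).
  by apply: eq_mxcol => i; rewrite ffunE.
have := eK (s i0); rewrite inE => /negP; apply; apply/imsetP.
by exists s'; rewrite ?ffunE.
Qed.

End Alteration.

Local Open Scope R_scope.

Lemma pow_exp x n : exp x ^ n = exp (INR n * x).
Proof.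
elim: n => [|n IH]; first by rewrite /= Rmult_0_l exp_0.
by rewrite [LHS]/= IH S_INR -exp_plus; congr exp; ring.
Qed.

Lemma pow_one_plus_div_le_exp x a :
  0 <= x -> (0 < a)%N -> (1 + x / INR a) ^ a <= exp x.
Proof.
move=> x0 a_gt0; have a0 : 0 < INR a by apply/lt_0_INR/ltP.
apply: Rle_trans (_ : exp (x / INR a) ^ a <= _).
  apply: pow_incr; split; last exact: exp_ineq1_le.
  have : 0 <= x / INR a.
    by apply: Rmult_le_pos; [lra | apply/Rlt_le/Rinv_0_lt_compat].
  lra.
by rewrite pow_exp; right; congr exp; field; lra.
Qed.

Lemma beta_const_pow alpha (r e : nat) (Q : R) : (2 <= alpha)%N -> 0 < Q ->
  INR r <= beta_const alpha * Rpower Q (INR e / INR (alpha - 1)) ->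
  INR r ^ (alpha - 1) * (2 * exp 1 * gamma_const * INR alpha) <=
    INR (alpha - 1)`! * Q ^ e.
Proof.
move=> alpha_ge2 Q0; rewrite /beta_const.
set a1 := (alpha - 1)%N; set D := 2 * exp 1 * gamma_const * INR alpha.
have D0 : 0 < D.
  have : 0 < INR alpha by apply/lt_0_INR/ltP; lia.
  have := exp_pos 1; rewrite /D /gamma_const; nra.
have fact0 : 0 < INR a1`! by apply/lt_0_INR/ltP/fact_gt0.
have a10 : 0 < INR a1 by apply/lt_0_INR/ltP; rewrite /a1; lia.
set X := INR a1`! / D; have X0 : 0 < X by apply: Rdiv_lt_0_compat.
have root_pow (y c : R) : 0 < y -> Rpower y (c / INR a1) ^ a1 = Rpower y c.
  move=> y0; rewrite -Rpower_pow ?Rpower_mult; last by apply: exp_pos.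
  by congr Rpower; field; lra.
move=> le_r.
have : INR r ^ a1 <= (Rpower X (1 / INR a1) * Rpower Q (INR e / INR a1)) ^ a1.
  by apply: pow_incr; split; [apply: pos_INR | exact: le_r].
rewrite Rpow_mult_distr !root_pow // Rpower_1 // Rpower_pow // => le_pow.
apply: Rle_trans (_ : X * Q ^ e * D <= _).
  by apply: Rmult_le_compat_r; lra.
by right; rewrite /X; field; lra.
Qed.

(* The factor 4 e^2 comes from the low-rank count and from (1 + 2/alpha)^alpha,
   and 2 e <= gamma alpha absorbs what is left. *)
Lemma bad_count_le_budget (alpha r b : nat) (Q : R) :
  (2 <= alpha)%N -> (alpha <= r)%N -> 0 < Q ->
  INR b * Q * INR alpha`! <= 4 * INR (r + (r %/ alpha + 1)) ^ alpha ->
  INR r ^ (alpha - 1) * (2 * exp 1 * gamma_const * INR alpha) <=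
    INR (alpha - 1)`! * Q ->
  (b <= r %/ alpha + 1)%N.
Proof.
move=> alpha_ge2 alpha_le_r Q0 count_bad le_r.
set k := (r %/ alpha + 1)%N; set a := INR alpha; set x := INR r; set K := INR k.
have a2 : 2 <= a by apply: (INR_leq alpha_ge2).
have ax : a <= x by apply: INR_leq.
have x_lt_Ka : x < K * a.
  have /ltP/lt_INR := ltn_ceil r (ltnW alpha_ge2).
  by rewrite -addn1 INR_muln => lt_r; apply: lt_r.
have Ka_le : K * a <= x + a.
  have := INR_leq (leq_divM r alpha); rewrite INR_muln -/a -/x /K /k INR_addn /=.
  lra.
have rk_le : INR (r + k) <= x * (1 + 2 / a).
  rewrite INR_addn -/x -/K.
  have -> : x * (1 + 2 / a) = x + 2 * x / a by field; lra.
  apply/Rplus_le_compat_l/(Rmult_le_reg_r a) => //; first lra.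
  by rewrite /Rdiv Rmult_assoc Rinv_l; lra.
have e2 : exp 2 = exp 1 * exp 1 by rewrite -exp_plus; congr exp; ring.
have pow_rk : INR (r + k) ^ alpha <= x ^ alpha * (exp 1 * exp 1).
  rewrite -e2; apply: Rle_trans (_ : (x * (1 + 2 / a)) ^ alpha <= _).
    by apply: pow_incr; split; [apply: pos_INR | exact: rk_le].
  rewrite Rpow_mult_distr; apply: Rmult_le_compat_l; first by apply: pow_le; lra.
  by apply: pow_one_plus_div_le_exp; [lra | lia].
have [a1 def_alpha] : exists a1, alpha = a1.+1 by exists alpha.-1; lia.
rewrite def_alpha subSS subn0 -def_alpha -/a -/x in le_r.
rewrite def_alpha factS INR_muln -def_alpha -/a -/k in count_bad.
rewrite def_alpha [x ^ _]/= -def_alpha in pow_rk.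
have fact0 : 0 < INR a1`! by apply/lt_0_INR/ltP/fact_gt0.
have e0 := exp_pos 1; set G := 2 * exp 1 * gamma_const * a in le_r *.
have ee0 : 0 <= 4 * x * (exp 1 * exp 1) by apply: Rmult_le_pos; nra.
have G0 : 0 < G by rewrite /G /gamma_const; nra.
have bound_aG : INR b * (a * G) <= 4 * x * (exp 1 * exp 1).
  apply: (Rmult_le_reg_l (Q * INR a1`!)); first nra.
  have : INR b * Q * (a * INR a1`!) * G <=
         4 * (x * x ^ a1 * (exp 1 * exp 1)) * G.
    by apply: Rmult_le_compat_r; nra.
  have : x ^ a1 * G * (4 * x * (exp 1 * exp 1)) <=
         INR a1`! * Q * (4 * x * (exp 1 * exp 1)).
    exact: Rmult_le_compat_r.
  nra.
have two_e_le : 2 * exp 1 <= gamma_const * a.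
  by have := exp_le_3; rewrite /gamma_const; lra.
have b_le : INR b * a <= x.
  apply: (Rmult_le_reg_r (gamma_const * a * (2 * exp 1))).
    by rewrite /gamma_const; nra.
  apply: Rle_trans (_ : 4 * x * (exp 1 * exp 1) <= _).
    by apply: Rle_trans bound_aG; right; rewrite /G; ring.
  have : x * (2 * exp 1) * (2 * exp 1) <= x * (2 * exp 1) * (gamma_const * a).
    by apply: Rmult_le_compat_l; nra.
  nra.
have : (b < k)%N by apply/ltP/INR_lt/(Rmult_lt_reg_r a); rewrite -/K; lra.
exact: ltnW.
Qed.

Lemma exists_family_few_bad_tuples (F : finFieldType) (m n alpha N s0 e : nat) :
  (alpha <= N)%N -> (s0 <= alpha * m)%N -> (s0 <= n)%N ->
  (s0 * (alpha * m + n - s0) + e = alpha * m * n)%N ->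
  exists A0 : {ffun 'I_N -> 'M[F]_(m, n)},
    INR #|bad_tuples alpha s0 A0| * INR #|F| ^ e * INR alpha`! <=
      4 * INR N ^ alpha.
Proof.
move=> alpha_le_N s0_le_N s0_le_n defect.
have [A0 few_bad] := exists_few_bad_tuples F m n s0 alpha_le_N.
have q_pos : 0 < INR #|F| by have := card_field_ge2 F; lra.
exists A0; set q := INR #|F| in q_pos *; set E := (s0 * (alpha * m + n - s0))%N.
have sum_m : (\sum_(i < alpha) m = alpha * m)%N by rewrite sum_nat_const card_ord.
rewrite sum_m card_mx -expnM [(m * n * alpha)%N]mulnC mulnA in few_bad.
have low := card_lowrank_mx_le F s0_le_N s0_le_n; rewrite -/q -/E in low.
set I := #|[set s : {ffun 'I_alpha -> 'I_N} | increasing s]|.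
have incr : INR I * INR alpha`! <= INR N ^ alpha.
  rewrite -INR_muln -INR_expn; apply: INR_leq.
  apply: leq_trans (ffact_le_expn N alpha).
  by rewrite -bin_ffact leq_mul2r card_increasing orbT.
have := INR_leq few_bad.
rewrite !INR_muln INR_expn -/q -defect addnC pow_addn -/E -/I => few.
have bad_le : INR #|bad_tuples alpha s0 A0| * q ^ e <= 4 * INR I.
  apply: (Rmult_le_reg_r (q ^ E)); first exact: pow_lt.
  rewrite Rmult_assoc; apply: Rle_trans few _.
  have := pos_INR I; nra.
have := pos_INR alpha`!; nra.
Qed.

Theorem mainTheorem15 (F : finFieldType) (q alpha eps l t h r : nat) :
  #|F| = q ->
  (2 <= alpha)%N -> (1 <= l)%N -> (1 <= t)%N ->
  (1 <= h)%N -> (h <= alpha * l + eps)%N ->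
  Rle (INR r) (Rmult (beta_const alpha)
            (Rpower (INR q) (Rdiv (INR (f_exp alpha eps l h t)) (INR (alpha - 1))))) ->
  exists A : 'I_r -> 'M[F]_(l * t, h * t),
    forall s : 'I_alpha -> 'I_r,
      (forall i j : 'I_alpha, (i < j)%N -> (s i < s j)%N) ->
      ((h - eps) * t <= \rank (stack A s))%N.
Proof.
move=> <- alpha_ge2 _ t_gt0 _ h_le le_r.
have [h_le_eps | eps_lt_h] := leqP h eps.
  by exists (fun _ => 0%R) => s _; move: h_le_eps; rewrite -subn_eq0 => /eqP ->.
have [r_lt_alpha | alpha_le_r] := ltnP r alpha.
  exists (fun _ => 0%R) => s /increasing_inj /leq_card.
  by rewrite !card_ord leqNgt r_lt_alpha.
have [defect s0_le_N s0_le_M] := f_exp_rank_deficiency t_gt0 eps_lt_h h_le.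
have [A0 few_bad] :=
  exists_family_few_bad_tuples F (N := (r + (r %/ alpha + 1))%N)
    (leq_trans alpha_le_r (leq_addr _ _)) s0_le_N s0_le_M defect.
have q_pos : 0 < INR #|F| by have := card_field_ge2 F; lra.
have bad_le := bad_count_le_budget alpha_ge2 alpha_le_r (pow_lt _ _ q_pos) few_bad
  (beta_const_pow alpha_ge2 q_pos le_r).
have alpha_gt0 : (0 < alpha)%N := ltnW alpha_ge2.
have [A good] := exists_family_without_bad_tuples alpha_gt0
  (leq_trans alpha_gt0 alpha_le_r) bad_le (leqnn _).
exists A => s s_incr; have := good s s_incr.
by rewrite prednK // muln_gt0 subn_gt0 eps_lt_h.
Qed.
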